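(* Let $m,n\ge1$ and let $\theta\vdash mn$ be $m$-splittable with $m$-split $(\theta^{(0)},\dots,\theta^{(m-1)})$. Then \[ H_\theta(x) = m^{mn} \prod_{r=0}^{m-1} \prod_{j=1}^{m} H_{\theta^{(r)}} \left( \frac{x+r-m+j}{m} \right). \]
   Context: With the rising factorial $x^{(k)}=x(x+1)\cdots(x+k-1)$, $H_\theta(x)=\prod_{i=1}^{l(\theta)}(x-i+1)^{(\theta_i)}=\prod_{w\in\theta}(x+c(w))$, where $c(w)=j-i$ is the content of the cell $w$ in row $i$, column $j$; $H_\emptyset=1$. A set $S\subseteq\mathbb{Z}$ satisfies the charge condition if $S\cap\mathbb{Z}_{\ge0}$ and $\mathbb{Z}_{<0}\setminus S$ are finite and have the same cardinality. For a partition $\lambda=(\lambda_1\ge\lambda_2\ge\cdots)$ (with $\lambda_k=0$ for $k>l(\lambda)$), $S_\lambda=\{\lambda_k-k: k\ge1\}$; $\lambda\mapsto S_\lambda$ is a bijection from partitions to sets satisfying the charge condition. The $m$-split of a set $S$ is $(S_0,\dots,S_{m-1})$ with $S_r=\{a\in\mathbb{Z}: ma+r\in S\}$. A partition $\theta$ is $m$-splittable if every $S_r$ in the $m$-split of $S_\theta$ satisfies the charge condition; its $m$-split is then $(\theta^{(0)},\dots,\theta^{(m-1)})$ where $\theta^{(r)}$ is the partition with $S_{\theta^{(r)}}=S_r$. *)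

From HB Require Import structures.
From mathcomp Require Import all_boot all_order all_algebra.
Set Implicit Arguments. Unset Strict Implicit. Unset Printing Implicit Defensive.
Import Order.TTheory GRing.Theory Num.Theory.

Definition is_partition (la : seq nat) : bool :=
  sorted geq la && all (fun a => 0 < a) la.

Definition partition_of (la : seq nat) (N : nat) : Prop :=
  is_partition la /\ sumn la = N.

(* lambda_k for k >= 1 (zero beyond the length) *)
Definition part (la : seq nat) (k : nat) : nat := nth 0 la k.-1.

Definition Sset (la : seq nat) : int -> Prop :=
  fun a => exists k : nat, (0 < k)%N /\ a = (Posz (part la k) - Posz k)%R.

Definition charge_condition (S : int -> Prop) : Prop :=
  exists (l1 l2 : seq int),
    [/\ uniq l1, uniq l2, size l1 = size l2,
        (forall a : int, a \in l1 <-> (S a /\ (0 <= a)%R)) &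
        (forall a : int, a \in l2 <-> ((a < 0)%R /\ ~ S a))].

Definition msplit (m r : nat) (S : int -> Prop) : int -> Prop :=
  fun a => S (Posz m * a + Posz r)%R.

Definition m_splittable (m : nat) (la : seq nat) : Prop :=
  forall r : nat, (r < m)%N -> charge_condition (msplit m r (Sset la)).

Local Open Scope ring_scope.
Definition Hpoly (R : ringType) (th : seq nat) (x : R) : R :=
  \prod_(i < size th) \prod_(j < nth 0%N th i) (x + (Posz j - Posz i)%:~R).

From HB Require Import structures.
From mathcomp Require Import all_boot all_order all_algebra.
From mathcomp Require Import zify ring.
Import Order.TTheory GRing.Theory Num.Theory.
Local Open Scope ring_scope.

(* Grouping cells by content, H_theta = prod_c (x + c)^(n_theta(c))
   where n_theta(c) is the number of cells of content c.  The heart of the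
   proof is the multiplicity identity
       n_theta(c) = sum_(r < m) n_(theta^(r)) (ceil ((c - r) / m)),
   obtained by writing n_theta(c) as a difference of counts of elements >= c
   of the set S_theta = { theta_k - k } and splitting S_theta into residue
   classes modulo m, which by definition are the sets S_(theta^(r)).
   Conversely, for a fixed r the contents c = m a + r - m + j, j = 1..m, are
   exactly those with ceil ((c - r) / m) = a, so regrouping the product
   yields prod_r prod_j H_(theta^(r)) evaluated at the shifted contents. *)

Section BigNat.
Variables (T : Type) (idx : T) (op : Monoid.law idx).

Lemma big_nat_blocks (m N : nat) (F : nat -> T) :
  \big[op/idx]_(0 <= n < m * N) F n =
  \big[op/idx]_(0 <= q < N) \big[op/idx]_(0 <= j < m) F (m * q + j)%N.
Proof.
rewrite mulnC big_nat_mul; apply: eq_bigr => q _.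
rewrite -[X in \big[_/_]_(X <= _ < _) _]add0n big_addn.
have -> : (q.+1 * m - q * m = m)%N by rewrite mulSn addnK.
by apply: eq_bigr => j _; rewrite addnC mulnC.
Qed.

Lemma big_nat_support (a lo hi b : nat) (h : nat -> T) :
  (a <= lo)%N -> (hi <= b)%N ->
  (forall n, ~~ (lo <= n < hi)%N -> h n = idx) ->
  \big[op/idx]_(a <= n < b) h n = \big[op/idx]_(lo <= n < hi) h n.
Proof.
move=> a_lo hi_b h_out; have [lo_hi|hi_lt] := leqP lo hi; last first.
  by rewrite [RHS]big_geq 1?ltnW // big1_seq // => n _; apply: h_out; lia.
rewrite (big_cat_nat a_lo) ?(leq_trans lo_hi hi_b) //= (big_cat_nat lo_hi hi_b) /=.
rewrite [X in op X _]big1_seq ?Monoid.mul1m; last first.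
  by move=> n; rewrite mem_index_iota => n_lo; apply: h_out; lia.
rewrite [X in op _ X]big1_seq ?Monoid.mulm1 // => n.
by rewrite mem_index_iota => n_hi; apply: h_out; lia.
Qed.

End BigNat.

Lemma count_sum (I : Type) (P : pred I) (s : seq I) :
  count P s = (\sum_(x <- s) (P x : nat))%N.
Proof. by elim: s => [|x s IH]; rewrite ?big_nil ?big_cons //= IH. Qed.

Lemma nth_le_sumn (la : seq nat) (i : nat) : (nth 0%N la i <= sumn la)%N.
Proof.
elim: la i => [|x la IH] [|i] //=; first exact: leq_addr.
exact: leq_trans (IH i) (leq_addl _ _).
Qed.

Lemma count_uniq_window (L : seq int) (K U : nat) (P : pred int) :
  uniq L -> (forall a, a \in L -> - (K%:Z) <= a < U%:Z) ->
  count P L =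
  (\sum_(0 <= q < K + U) (((q%:Z - K%:Z)%R \in L) && P (q%:Z - K%:Z)%R : nat))%N.
Proof.
move=> L_uniq L_range.
rewrite [RHS](_ : _ = count (fun q : nat => (q%:Z - K%:Z \in L) && P (q%:Z - K%:Z))
                       (iota 0 (K + U))); last by rewrite count_sum /index_iota subn0.
rewrite -(count_map (fun q : nat => q%:Z - K%:Z) (fun a => (a \in L) && P a)).
set W := map _ _.
have W_uniq : uniq W by rewrite map_inj_uniq ?iota_uniq // => x y; lia.
have L_W : perm_eq L [seq a <- W | a \in L].
  apply: uniq_perm => //; first exact: filter_uniq.
  move=> a; rewrite mem_filter; apply/idP/idP => [a_L|/andP[] //].
  rewrite a_L /=; have := L_range a a_L => a_range.
  by apply/mapP; exists (absz (a + K%:Z)); [rewrite mem_iota|]; lia.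
rewrite [RHS](@eq_count _ _ (predI P (mem L))); last by move=> a /=; rewrite andbC.
rewrite -count_filter.
by move/permP: L_W => ->.
Qed.

(* Products over the cells of la of a function g of the content j - i
   (rows i and columns j counted from 0); Hpoly la x = Hcells la (x + _). *)
Definition Hcells {R : nzRingType} (la : seq nat) (g : int -> R) : R :=
  \prod_(i < size la) \prod_(j < nth 0%N la i) g (Posz j - Posz i).

Lemma Hcells_ext (R : nzRingType) (la : seq nat) (g1 g2 : int -> R) :
  g1 =1 g2 -> Hcells la g1 = Hcells la g2.
Proof. by move=> eq_g; apply: eq_bigr => i _; apply: eq_bigr => j _. Qed.

Lemma Hpoly_scale (R : fieldType) (la : seq nat) (x a : R) : a != 0 ->
  Hpoly la x = a ^+ sumn la * Hcells la (fun c => (x + c%:~R) / a).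
Proof.
move=> a_neq0.
have sumn_rows : (\sum_(i < size la) nth 0%N la i)%N = sumn la.
  by rewrite sumnE (big_nth 0%N) big_mkord.
have -> : Hcells la (fun c => (x + c%:~R) / a) = Hpoly la x * a^-1 ^+ sumn la.
  rewrite /Hcells /Hpoly -sumn_rows -prodrXr -big_split /=.
  by apply: eq_bigr => i _; rewrite big_split /= prodr_const card_ord.
by rewrite mulrCA -exprMn mulfV // expr1n mulr1.
Qed.

(* Number of cells of content c in la (a cell (i, j), counted from 0, has
   content j - i, so row i contributes iff -i <= c < la_i - i). *)
Definition content_mult (la : seq nat) (c : int) : nat :=
  count (fun i : nat => (- (i%:Z) <= c) && (c < (nth 0%N la i)%:Z - i%:Z))
        (iota 0 (size la)).

Lemma content_mult_eq0 (la : seq nat) (c : int) :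
  (c <= - (size la)%:Z) || ((sumn la)%:Z <= c) -> content_mult la c = 0%N.
Proof.
move=> c_out; rewrite /content_mult (@eq_in_count _ _ pred0) ?count_pred0 // => i.
rewrite mem_iota => /andP[_ i_lt] /=; have := nth_le_sumn la i; lia.
Qed.

Definition window_prod {R : nzRingType} (K : nat) (e : int -> nat) (G : int -> R) : R :=
  \prod_(0 <= n < K + K) G (n%:Z - K%:Z) ^+ e (n%:Z - K%:Z).

Lemma Hcells_window (R : comNzRingType) (la : seq nat) (g : int -> R) (M : nat) :
  (size la <= M)%N -> (sumn la <= M)%N ->
  Hcells la g = window_prod M (content_mult la) g.
Proof.
move=> size_le sumn_le; rewrite /window_prod /content_mult.
under eq_bigr => n _ do rewrite count_sum -prodrXr.
rewrite exchange_big /= /Hcells.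
rewrite -(big_mkord xpredT (fun i => \prod_(j < nth 0%N la i) g (Posz j - Posz i))).
rewrite /index_iota subn0.
apply: eq_big_seq => i; rewrite mem_iota => /andP[_ i_lt].
have row_le := nth_le_sumn la i.
rewrite (@big_nat_support _ _ _ _ (M - i) (M - i + nth 0%N la i)); first last.
- by move=> n n_out; rewrite (_ : (_ && _) = false) ?expr0 //; lia.
- lia.
- lia.
rewrite -{1}[(M - i)%N]add0n big_addn addKn big_mkord.
apply: eq_bigr => j _; have j_lt := ltn_ord j.
by rewrite (_ : (_ && _) = true) ?expr1; [congr g; lia | lia].
Qed.

Definition beta (la : seq nat) (k : nat) : int := (part la k)%:Z - k%:Z.

Definition betas (la : seq nat) (K : nat) : seq int := map (beta la) (iota 1 K).

Definition nbeta_ge (la : seq nat) (c : int) (K : nat) : nat :=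
  count (fun a => c <= a) (betas la K).

Lemma Sset_nil (a : int) : Sset [::] a <-> a < 0.
Proof.
split; first by case=> k [k_gt0 ->]; rewrite /part nth_nil; lia.
by move=> a_lt0; exists `|a|%N; rewrite /part nth_nil; split; lia.
Qed.

Lemma mem_betas (la : seq nat) (K : nat) (a : int) :
  (size la <= K)%N -> - (K%:Z) <= a -> (a \in betas la K) <-> Sset la a.
Proof.
move=> size_le a_ge; split.
  by case/mapP=> k; rewrite mem_iota => /andP[k_gt0 _] ->; exists k.
case=> k [k_gt0 a_eq]; rewrite a_eq in a_ge *.
apply/mapP; exists k => //; rewrite mem_iota k_gt0 /=.
have [k_le|K_lt] := leqP k K; first lia.
by move: a_ge; rewrite /part nth_default; lia.
Qed.

Lemma beta_decreasing (la : seq nat) (k k' : nat) : is_partition la ->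
  (0 < k)%N -> (k < k')%N -> beta la k' < beta la k.
Proof.
case/andP=> la_sorted _ k_gt0 k_lt.
suff : (part la k' <= part la k)%N by rewrite /beta; lia.
rewrite /part; have [k'_lt|k'_ge] := ltnP k'.-1 (size la); last by rewrite nth_default.
have geq_trans : transitive geq by move=> y x z yx zy; exact: leq_trans zy yx.
by apply: (sorted_leq_nth geq_trans (fun x => leqnn x)) => //; rewrite ?inE; lia.
Qed.

Lemma betas_uniq (la : seq nat) (K : nat) : is_partition la -> uniq (betas la K).
Proof.
move=> la_part; rewrite map_inj_in_uniq ?iota_uniq // => k k'.
rewrite !mem_iota => /andP[k_gt0 _] /andP[k'_gt0 _] eq_beta.
case: (ltngtP k k') => // [k_lt|k'_lt].
- by have := beta_decreasing _ _ _ la_part k_gt0 k_lt; rewrite eq_beta ltxx.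
- by have := beta_decreasing _ _ _ la_part k'_gt0 k'_lt; rewrite eq_beta ltxx.
Qed.

Lemma betas_range (la : seq nat) (K : nat) (a : int) :
  a \in betas la K -> - (K%:Z) <= a < (sumn la)%:Z.
Proof.
case/mapP=> k; rewrite mem_iota => /andP[k_gt0 k_le] ->.
by have := nth_le_sumn la k.-1; rewrite /beta /part; lia.
Qed.

(* A row contributes a cell of content c iff its beta-number jumps over c:
   n_la(c) is the excess of la over the empty partition in beta-counts. *)
Lemma content_mult_betas (la : seq nat) (c : int) (K : nat) :
  (size la <= K)%N -> (content_mult la c + nbeta_ge [::] c K)%N = nbeta_ge la c K.
Proof.
move=> size_le; rewrite /nbeta_ge /betas -[1%N]/(1 + 0)%N iotaDl !count_map.
have -> : content_mult la c =
    count (fun i : nat => (- (i%:Z) <= c) && (c < (nth 0%N la i)%:Z - i%:Z)) (iota 0 K).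
  rewrite /content_mult -(subnKC size_le) iotaD count_cat add0n.
  rewrite (@eq_in_count _ _ pred0 (iota (size la) _)) ?count_pred0 ?addn0 // => i.
  by rewrite mem_iota => /andP[i_ge _] /=; rewrite nth_default //; lia.
rewrite !count_sum -big_split /=; apply: eq_bigr => i _.
rewrite /beta /part /= nth_nil add0n.
have [c_i|c_i] := lerP (- (i%:Z)) c => /=.
- have -> : (c <= 0%Z - (1 + i)%N%:Z) = false by apply/negbTE; rewrite -ltNge; lia.
  by rewrite addn0; congr (nat_of_bool _); apply/idP/idP; lia.
- have -> : (c <= 0%Z - (1 + i)%N%:Z) by lia.
  by have -> : (c <= (nth 0%N la i)%:Z - (1 + i)%N%:Z) by lia.
Qed.

(* ceil ((c - r) / m): the least a with c <= m a + r. *)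
Definition msplit_index (m r : nat) (c : int) : int := - ((r%:Z - c) %/ m%:Z)%Z.

Lemma le_msplit_index (m r : nat) (c a : int) : (0 < m)%N ->
  (c <= m%:Z * a + r%:Z) = (msplit_index m r c <= a).
Proof.
move=> m_gt0; rewrite /msplit_index.
have := divz_eq (r%:Z - c) m%:Z.
have rem_ge0 : 0 <= ((r%:Z - c) %% m%:Z)%Z by apply: modz_ge0; lia.
have rem_lt : ((r%:Z - c) %% m%:Z)%Z < m%:Z by apply: ltz_pmod; lia.
move: rem_ge0 rem_lt; set q := ((r%:Z - c) %/ m%:Z)%Z; set rho := ((r%:Z - c) %% m%:Z)%Z.
by move=> *; apply/idP/idP => ?; nia.
Qed.

Lemma msplit_index_block (m r j : nat) (a : int) : (j < m)%N ->
  msplit_index m r (m%:Z * a + (r%:Z - m%:Z + j.+1%:Z)) = a.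
Proof.
move=> j_lt; have m_gt0 : (0 < m)%N by lia.
have le_a : msplit_index m r (m%:Z * a + (r%:Z - m%:Z + j.+1%:Z)) <= a.
  by rewrite -le_msplit_index //; lia.
have gt_a1 : ~~ (msplit_index m r (m%:Z * a + (r%:Z - m%:Z + j.+1%:Z)) <= a - 1).
  by rewrite -le_msplit_index //; lia.
lia.
Qed.

Definition is_msplit (m : nat) (theta : seq nat) (thetas : nat -> seq nat) : Prop :=
  forall r : nat, (r < m)%N ->
    is_partition (thetas r) /\
    (forall a : int, Sset (thetas r) a <-> msplit m r (Sset theta) a).

Lemma is_msplit_nil (m : nat) : (0 < m)%N -> is_msplit m [::] (fun _ => [::]).
Proof. by move=> m_gt0 r r_lt; split=> // a; rewrite /msplit !Sset_nil; split; nia. Qed.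

(* Splitting the beta-numbers into residue classes mod m: those of theta
   that are >= c and congruent to r are the m a + r with a a beta-number of
   thetas r and a >= msplit_index m r c. *)
Lemma nbeta_msplit (m K U : nat) (theta : seq nat) (thetas : nat -> seq nat) (c : int) :
  (0 < m)%N -> is_partition theta -> is_msplit m theta thetas ->
  (size theta <= m * K)%N -> (sumn theta <= m * U)%N ->
  (forall r, (r < m)%N -> (size (thetas r) <= K)%N /\ (sumn (thetas r) <= U)%N) ->
  nbeta_ge theta c (m * K) =
  (\sum_(r < m) nbeta_ge (thetas r) (msplit_index m r c) K)%N.
Proof.
move=> m_gt0 theta_part theta_split size_le sumn_le sizes_le.
rewrite /nbeta_ge (@count_uniq_window _ (m * K) (m * U)); first last.
- by move=> a /betas_range; lia.
- exact: betas_uniq.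
rewrite -mulnDr big_nat_blocks exchange_big /= big_mkord.
apply: eq_bigr => [[r r_lt]] _ /=.
have [thetar_part thetar_S] := theta_split r r_lt.
have [size_r sumn_r] := sizes_le r r_lt.
rewrite (@count_uniq_window _ K U); first last.
- by move=> a /betas_range; lia.
- exact: betas_uniq.
apply: eq_big_nat => q /andP[_ q_lt].
have -> : ((m * q + r)%N%:Z - (m * K)%N%:Z)%R = m%:Z * (q%:Z - K%:Z) + r%:Z by lia.
rewrite -le_msplit_index //; congr (nat_of_bool (_ && _)).
have a_ge : - (K%:Z) <= q%:Z - K%:Z by lia.
have ma_ge : - ((m * K)%N%:Z) <= m%:Z * (q%:Z - K%:Z) + r%:Z by lia.
apply/idP/idP.
- by move/(mem_betas _ _ _ size_le ma_ge)/thetar_S/(mem_betas _ _ _ size_r a_ge).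
- by move/(mem_betas _ _ _ size_r a_ge)/thetar_S/(mem_betas _ _ _ size_le ma_ge).
Qed.

Lemma nat_family_bound (b : nat) (f : nat -> nat) (m : nat) :
  exists M : nat, (b < M)%N /\ forall r, (r < m)%N -> (f r < M)%N.
Proof.
exists (b + \sum_(r < m) f r).+1; split=> [|r r_lt]; first lia.
by rewrite ltnS (bigD1 (Ordinal r_lt)) //=; lia.
Qed.

Lemma content_mult_msplit (m : nat) (theta : seq nat) (thetas : nat -> seq nat) (c : int) :
  (0 < m)%N -> is_partition theta -> is_msplit m theta thetas ->
  content_mult theta c =
  (\sum_(r < m) content_mult (thetas r) (msplit_index m r c))%N.
Proof.
move=> m_gt0 theta_part theta_split.
have [M [theta_lt thetas_lt]] := nat_family_bound (size theta + sumn theta)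
  (fun r => size (thetas r) + sumn (thetas r))%N m.
have M_le : (M <= m * M)%N by rewrite leq_pmull.
have sizes_le r : (r < m)%N -> (size (thetas r) <= M)%N /\ (sumn (thetas r) <= M)%N.
  by move/thetas_lt; lia.
have theta_nb : nbeta_ge theta c (m * M) =
    (\sum_(r < m) nbeta_ge (thetas r) (msplit_index m r c) M)%N.
  by apply: (nbeta_msplit _ _ _ _ _ _ m_gt0 theta_part theta_split _ _ sizes_le); lia.
have nil_nb : nbeta_ge [::] c (m * M) =
    (\sum_(r < m) nbeta_ge [::] (msplit_index m r c) M)%N.
  by apply: (nbeta_msplit m M M [::] (fun _ => [::]) c m_gt0 isT (is_msplit_nil m m_gt0)).
apply/eqP; rewrite -(eqn_add2r (nbeta_ge [::] c (m * M))) content_mult_betas; last lia.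
rewrite theta_nb nil_nb -big_split /=; apply/eqP/eq_bigr => r _.
by rewrite content_mult_betas //; case: (sizes_le r (ltn_ord r)).
Qed.

Lemma window_prod_msplit (R : comNzRingType) (m M : nat) (e : nat -> int -> nat)
    (G : int -> R) :
  (0 < m)%N ->
  (forall r a, (r < m)%N -> (a <= - (M%:Z)) || (M%:Z - 1 <= a) -> e r a = 0%N) ->
  window_prod (m * M) (fun c => \sum_(r < m) e r (msplit_index m r c))%N G =
  \prod_(r < m) \prod_(j < m)
     window_prod M (e r) (fun a => G (m%:Z * a + (r%:Z - m%:Z + j.+1%:Z))).
Proof.
move=> m_gt0 e_out; rewrite /window_prod.
under eq_bigr => n _ do rewrite -prodrXr.
rewrite exchange_big /=; apply: eq_bigr => [[r r_lt]] _ /=.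
pose c_of n := n%:Z - (m * M)%N%:Z - m%:Z.
pose h n := G (c_of n) ^+ e r (msplit_index m r (c_of n)).
have h_out n : ~~ (m <= n < m * (M + M))%N -> h n = 1.
  move=> n_out; rewrite /h e_out ?expr0 //.
  have [n_lt|n_ge] := ltnP n m.
    by apply/orP; left; rewrite -le_msplit_index // /c_of; lia.
  have : ~~ (msplit_index m r (c_of n) <= M%:Z - 2) by rewrite -le_msplit_index // /c_of; lia.
  by lia.
transitivity (\prod_(0 + m <= n < m * (M + M) + m) h n).
  rewrite big_addn addnK mulnDr; apply: eq_bigr => n _.
  by rewrite /h (_ : c_of (n + m)%N = n%:Z - (m * M)%N%:Z) // /c_of; lia.
rewrite (@big_nat_support _ _ _ _ m (m * (M + M))) //; try lia.
rewrite -(@big_nat_support _ _ _ (0 + r.+1) m (m * (M + M)) (m * (M + M) + r.+1)) //; try lia.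
rewrite big_addn addnK big_nat_blocks exchange_big big_mkord.
apply: eq_bigr => j _; apply: eq_bigr => q _; rewrite /h.
have -> : c_of (m * q + j + r.+1)%N =
  m%:Z * (q%:Z - M%:Z) + (r%:Z - m%:Z + j.+1%:Z) by rewrite /c_of; lia.
by rewrite msplit_index_block.
Qed.

Lemma Hcells_msplit (R : comNzRingType) (m : nat) (theta : seq nat)
    (thetas : nat -> seq nat) (g : int -> R) :
  (0 < m)%N -> is_partition theta -> is_msplit m theta thetas ->
  Hcells theta g =
  \prod_(r < m) \prod_(j < m)
     Hcells (thetas r) (fun a => g (m%:Z * a + (r%:Z - m%:Z + j.+1%:Z))).
Proof.
move=> m_gt0 theta_part theta_split.
have [M [theta_lt thetas_lt]] := nat_family_bound (size theta + sumn theta)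
  (fun r => size (thetas r) + sumn (thetas r))%N m.
have M_le : (M <= m * M)%N by rewrite leq_pmull.
rewrite (Hcells_window _ _ _ (m * M)); try lia.
have -> : window_prod (m * M) (content_mult theta) g =
    window_prod (m * M) (fun c => \sum_(r < m) content_mult (thetas r) (msplit_index m r c))%N g.
  by apply: eq_bigr => n _; rewrite (content_mult_msplit _ _ _ _ m_gt0 theta_part theta_split).
rewrite (window_prod_msplit _ _ _ (fun r => content_mult (thetas r))) //; last first.
  by move=> r a r_lt a_out; apply: content_mult_eq0; have := thetas_lt r r_lt; lia.
apply: eq_bigr => r _; apply: eq_bigr => j _.
by rewrite (Hcells_window _ _ _ M) //; have := thetas_lt r (ltn_ord r); lia.
Qed.

Theorem mainTheorem4 (R : numFieldType) (m n : nat) (theta : seq nat)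
    (thetas : nat -> seq nat) (x : R) :
  (1 <= m)%N -> (1 <= n)%N ->
  partition_of theta (m * n) ->
  m_splittable m theta ->
  (forall r : nat, (r < m)%N ->
     is_partition (thetas r) /\
     (forall a : int, Sset (thetas r) a <-> msplit m r (Sset theta) a)) ->
  Hpoly theta x =
    (m%:R) ^+ (m * n) *
    \prod_(r < m) \prod_(j < m)
       Hpoly (thetas r) ((x + (r : nat)%:R - m%:R + (j : nat).+1%:R) / m%:R).
Proof.
move=> m_gt0 _ [theta_part theta_size] _ theta_split.
have m_neq0 : (m%:R : R) != 0 by rewrite pnatr_eq0 -lt0n.
rewrite (Hpoly_scale _ _ _ _ m_neq0) theta_size.
rewrite (Hcells_msplit _ _ _ _ _ m_gt0 theta_part theta_split).
congr (_ * _); apply: eq_bigr => r _; apply: eq_bigr => j _.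
apply: (@Hcells_ext _ _ _ (fun c => _ + c%:~R)) => a /=.
rewrite !intrD !intrM !intrN -!pmulrn.
by field.
Qed.
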